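(* Fix $Z_1,\ldots,Z_n$, $X_{n+1}$, a level $\tilde\alpha\in[0,1]$, and $\alpha\in(0,1)$, and let $V$ be a fixed score function. For $y\in\mathbb R$ set $V_{n+1}=V(X_{n+1},y)$, $v^*_i=Q\big(\tilde\alpha;\sum_{j=1}^np^H_{i,j}\delta_{V_j}+p^H_{i,n+1}\delta_{V_{n+1}}\big)$ for $i=1,\ldots,n+1$, and $$\hat\alpha(y)=\sum_{i=1}^{n+1}\frac{w(X_i)}{\sum_{j=1}^{n+1}w(X_j)}\mathbb 1\{V_i\le v^*_i\}.$$ Let $\bar v^*=Q(\tilde\alpha;\hat{\mathcal F})$, $v^*_{i1}=Q(\tilde\alpha;\sum_{j=1}^np^H_{i,j}\delta_{V_j}+p^H_{i,n+1}\delta_{\bar v^*})$ and $v^*_{i2}=Q(\tilde\alpha;\sum_{j=1}^np^H_{i,j}\delta_{V_j}+p^H_{i,n+1}\delta_0)$, $i=1,\ldots,n$. If $$\sum_{i=1}^n\frac{w(X_i)}{\sum_{j=1}^{n+1}w(X_j)}\mathbb 1\{V_i\le v^*_{i1}\}\ge\alpha\quad\text{and}\quad\sum_{i=1}^n\frac{w(X_i)}{\sum_{j=1}^{n+1}w(X_j)}\mathbb 1\{V_i\le v^*_{i2}\}+\frac{w(X_{n+1})}{\sum_{j=1}^{n+1}w(X_j)}\ge\alpha,$$ then $\inf_{y\in\mathbb R}\hat\alpha(y)\ge\alpha$.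
   Context: $w:\mathbb R^p\to(0,\infty)$ is a given weight function (the density ratio $d\tilde P_X/dP_X$ in the covariate-shift setting; $w\equiv1$ in the i.i.d. setting). $X=\{X_1,\ldots,X_{n+1}\}$ (unordered). A localizer is a function $H(x_1,x_2,X)\in[0,1]$ of $x_1,x_2\in\mathbb R^p$ and of the unordered set $X$, with $H(x,x,X)=1$; $H_{i,j}=H(X_i,X_j,X)$, $p^H_{i,j}=H_{i,j}/\sum_{k=1}^{n+1}H_{i,k}$. A fixed score function is a deterministic measurable $V:\mathbb R^p\times\mathbb R\to[0,\infty)$; $V_i=V(Z_i)$ for $i\le n$. $\hat{\mathcal F}=\sum_{j=1}^{n}p^H_{n+1,j}\delta_{V_j}+p^H_{n+1,n+1}\delta_{\infty}$; $\delta_v$ is the point mass at $v$. For a probability distribution $\mathcal F$ on $\mathbb R\cup\{\infty\}$ and $a\in[0,1]$, $Q(a;\mathcal F)=\inf\{t:\mathbb P_{T\sim\mathcal F}(T\le t)\ge a\}$. *)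

From Stdlib Require Import Reals Lra List Permutation Arith ClassicalEpsilon.
Import ListNotations.
Open Scope R_scope.

Inductive ER : Type := ENinf | EFin (r : R) | EPinf.

Definition ERleb (a b : ER) : bool :=
  match a, b with
  | ENinf, _ => true
  | _, EPinf => true
  | EFin x, EFin y => if Rle_dec x y then true else false
  | _, _ => false
  end.

Definition ERle (a b : ER) : Prop := ERleb a b = true.

(* A finitely supported distribution: list of (probability mass, atom). *)
Definition dist := list (R * ER).

Definition cdf (F : dist) (t : R) : R :=
  fold_right Rplus 0 (map (fun pv => if ERleb (snd pv) (EFin t) then fst pv else 0) F).

Definition is_inf_ER (S : R -> Prop) (q : ER) : Prop :=
  (forall t, S t -> ERle q (EFin t)) /\
  (forall q', (forall t, S t -> ERle q' (EFin t)) -> ERle q' q).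

Definition Quant (a : R) (F : dist) : ER :=
  epsilon (inhabits EPinf) (is_inf_ER (fun t => cdf F t >= a)).

Definition sumR (f : nat -> R) (l : list nat) : R := fold_right Rplus 0 (map f l).

Definition Pt (p : nat) := Fin.t p -> R.

(* A localizer H(x1, x2, X), with X an unordered set (list up to permutation). *)
Definition is_localizer {p : nat} (H : Pt p -> Pt p -> list (Pt p) -> R) : Prop :=
  (forall a b l, 0 <= H a b l <= 1) /\
  (forall a l, H a a l = 1) /\
  (forall a b l1 l2, Permutation l1 l2 -> H a b l1 = H a b l2).

Section Setup.
Context {p : nat} (H : Pt p -> Pt p -> list (Pt p) -> R)
        (w : Pt p -> R) (V : Pt p -> R -> R)
        (X : nat -> Pt p) (Y : nat -> R) (n : nat).
(* indices are 1..n+1; index n+1 is the test point *)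
Definition idx := seq 1 (n + 1).
Definition Xset := map X idx.
Definition Hij (i j : nat) : R := H (X i) (X j) Xset.
Definition pH (i j : nat) : R := Hij i j / sumR (fun k => Hij i k) idx.
Definition Vsc (j : nat) : R := V (X j) (Y j).
Definition dist_i (i : nat) (last : ER) : dist :=
  map (fun j => (pH i j, EFin (Vsc j))) (seq 1 n) ++ [(pH i (n + 1), last)].
Definition Fhat : dist := dist_i (n + 1) EPinf.
Definition wn (i : nat) : R := w (X i) / sumR (fun j => w (X j)) idx.
Definition indic (v : R) (q : ER) : R := if ERleb (EFin v) q then 1 else 0.
Definition Vy (y : R) (i : nat) : R := if Nat.eqb i (n + 1) then V (X (n + 1)) y else Vsc i.
Definition vstar (at_ y : R) (i : nat) : ER := Quant at_ (dist_i i (EFin (V (X (n + 1)) y))).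
Definition alpha_hat (at_ y : R) : R :=
  sumR (fun i => wn i * indic (Vy y i) (vstar at_ y i)) idx.
Definition vbar (at_ : R) : ER := Quant at_ Fhat.
Definition vstar1 (at_ : R) (i : nat) : ER := Quant at_ (dist_i i (vbar at_)).
Definition vstar2 (at_ : R) (i : nat) : ER := Quant at_ (dist_i i (EFin 0)).
End Setup.

From Stdlib Require Import Reals List.
From Stdlib Require Import Lra Lia Classical ClassicalEpsilon.
Import ListNotations.
Open Scope R_scope.

(* The argument rests on two facts about the quantile Q(a; F) of a finite
   distribution of the form  F = G + c delta_x  (a prefix G plus a last atom):
   (1) Q is monotone in the last atom x (raising x lowers the cdf), and
   (2) if the finite value v is NOT below Q(a; G + c delta_v), then the
       quantile is attained strictly left of v, where the atom at v is
       invisible; hence Q(a; G + c delta_{+oo}) <= v.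
   Fix y and write v = V_{n+1} >= 0.  If v <= v*_{n+1}, the test point counts
   with weight w_{n+1}, and by (1) with 0 <= v each v*_i dominates v*_{i2}: the
   second hypothesis gives the bound.  Otherwise (2) yields vbar <= v, so by
   (1) each v*_i dominates v*_{i1}, and the first hypothesis gives the bound. *)

Lemma ERle_fin a b : ERle (EFin a) (EFin b) <-> a <= b.
Proof.
  unfold ERle, ERleb; destruct (Rle_dec a b); split; intros; auto; try discriminate; lra.
Qed.

Lemma ERle_trans a b c : ERle a b -> ERle b c -> ERle a c.
Proof.
  unfold ERle; destruct a, b, c; simpl; auto; try discriminate.
  destruct (Rle_dec r r0), (Rle_dec r0 r1), (Rle_dec r r1); auto; try discriminate; lra.
Qed.

(* Every set of reals has an infimum in the extended reals: +oo for the empty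
   set, -oo for a set unbounded below, and otherwise the finite infimum given
   by completeness applied to the reflected set. *)
Lemma inf_exists (S : R -> Prop) : exists q, is_inf_ER S q.
Proof.
  destruct (classic (exists t, S t)) as [[t0 Ht0]|Hempty].
  - destruct (classic (exists m, forall t, S t -> m <= t)) as [[m Hm]|Hunb].
    + destruct (completeness (fun x => S (- x))) as [l [Hub Hlub]].
      * exists (- m). intros x Hx. specialize (Hm _ Hx). lra.
      * exists (- t0). rewrite Ropp_involutive. exact Ht0.
      * exists (EFin (- l)). split.
        { intros t Ht. apply ERle_fin.
          assert (- t <= l) by (apply Hub; rewrite Ropp_involutive; exact Ht). lra. }
        { intros [|r|] Hlow.
          - reflexivity.
          - apply ERle_fin. assert (l <= - r); [|lra].
            apply Hlub. intros x Hx. specialize (Hlow _ Hx). apply ERle_fin in Hlow. lra.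
          - specialize (Hlow _ Ht0). discriminate. }
    + exists ENinf. split; [intros; reflexivity|].
      intros [|r|] Hlow.
      * reflexivity.
      * exfalso. apply Hunb. exists r. intros t Ht. apply ERle_fin. auto.
      * specialize (Hlow _ Ht0). discriminate.
  - exists EPinf. split.
    + intros t Ht. exfalso. eauto.
    + intros [| |] _; reflexivity.
Qed.

Lemma Quant_spec a F : is_inf_ER (fun t => cdf F t >= a) (Quant a F).
Proof. unfold Quant. apply epsilon_spec, inf_exists. Qed.

Lemma Quant_le a F t : cdf F t >= a -> ERle (Quant a F) (EFin t).
Proof. apply (proj1 (Quant_spec a F)). Qed.

Lemma Quant_cdf_antitone a F1 F2 :
  (forall t, cdf F2 t <= cdf F1 t) -> ERle (Quant a F1) (Quant a F2).
Proof.
  intros Hcdf. apply (proj2 (Quant_spec a F2)).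
  intros t Ht. apply Quant_le. specialize (Hcdf t). lra.
Qed.

Lemma cdf_app l1 l2 t : cdf (l1 ++ l2) t = cdf l1 t + cdf l2 t.
Proof. unfold cdf. induction l1 as [|x l IH]; simpl; [lra|]. rewrite IH. lra. Qed.

Lemma cdf_last_antitone l c a b t : 0 <= c -> ERle a b ->
  cdf (l ++ [(c, b)]) t <= cdf (l ++ [(c, a)]) t.
Proof.
  intros Hc Hab. rewrite !cdf_app. unfold cdf at 2 4; simpl.
  destruct (ERleb b (EFin t)) eqn:Eb.
  - assert (Ea : ERle a (EFin t)) by (apply (ERle_trans _ b); auto).
    unfold ERle in Ea. rewrite Ea. lra.
  - destruct (ERleb a (EFin t)); lra.
Qed.

Lemma Quant_last_mono a l c x1 x2 : 0 <= c -> ERle x1 x2 ->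
  ERle (Quant a (l ++ [(c, x1)])) (Quant a (l ++ [(c, x2)])).
Proof. intros Hc Hx. apply Quant_cdf_antitone. intros t. now apply cdf_last_antitone. Qed.

Lemma cdf_last_right l c v t : t < v ->
  cdf (l ++ [(c, EFin v)]) t = cdf (l ++ [(c, EPinf)]) t.
Proof.
  intros Htv. rewrite !cdf_app. unfold cdf at 2 4; simpl.
  destruct (Rle_dec v t); [lra|reflexivity].
Qed.

(* Fact (2): if v is not below Q(a; l + c delta_v), the level is reached at
   some t < v, hence also by l + c delta_{+oo}, whose quantile is then <= v. *)
Lemma Quant_last_inf_le a l c v :
  ~ ERle (EFin v) (Quant a (l ++ [(c, EFin v)])) ->
  ERle (Quant a (l ++ [(c, EPinf)])) (EFin v).
Proof.
  intros Hnot.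
  assert (Hwit : exists t, t < v /\ cdf (l ++ [(c, EFin v)]) t >= a).
  { apply NNPP. intros Hnone. apply Hnot, (proj2 (Quant_spec _ _)).
    intros t Ht. apply ERle_fin.
    destruct (Rlt_le_dec t v) as [Hlt|Hle]; [exfalso; eauto|exact Hle]. }
  destruct Hwit as [t [Htv Ht]].
  apply (ERle_trans _ (EFin t)); [|apply ERle_fin; lra].
  apply Quant_le. rewrite <- (cdf_last_right l c v t Htv). exact Ht.
Qed.

Lemma sumR_app f l1 l2 : sumR f (l1 ++ l2) = sumR f l1 + sumR f l2.
Proof. unfold sumR. induction l1 as [|x l IH]; simpl; [lra|]. rewrite IH. lra. Qed.

Lemma sumR_le f g l : (forall x, In x l -> f x <= g x) -> sumR f l <= sumR g l.
Proof.
  unfold sumR. induction l as [|x l IH]; simpl; intros Hfg; [lra|].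
  assert (f x <= g x) by auto.
  assert (fold_right Rplus 0 (map f l) <= fold_right Rplus 0 (map g l)) by auto.
  lra.
Qed.

Lemma sumR_ext f g l : (forall x, In x l -> f x = g x) -> sumR f l = sumR g l.
Proof.
  intros Hfg. apply Rle_antisym; apply sumR_le; intros x Hx; rewrite (Hfg x Hx); lra.
Qed.

Lemma sumR_nonneg f l : (forall x, 0 <= f x) -> 0 <= sumR f l.
Proof.
  unfold sumR. induction l as [|x l IH]; simpl; intros Hf; [lra|].
  pose proof (Hf x). specialize (IH Hf). lra.
Qed.

(* Nonnegativity of a ratio, including the degenerate convention x / 0 = 0. *)
Lemma div_nonneg a b : 0 <= a -> 0 <= b -> 0 <= a / b.
Proof.
  intros Ha Hb. destruct (Req_dec b 0) as [->|Hb0].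
  - unfold Rdiv. rewrite Rinv_0. lra.
  - apply Rle_mult_inv_pos; lra.
Qed.

Lemma indic_mono v q1 q2 : ERle q1 q2 -> indic v q1 <= indic v q2.
Proof.
  intros H12. unfold indic. destruct (ERleb (EFin v) q1) eqn:E1.
  - assert (E2 : ERle (EFin v) q2) by (apply (ERle_trans _ q1); auto).
    unfold ERle in E2. rewrite E2. lra.
  - destruct (ERleb (EFin v) q2); lra.
Qed.

Lemma indic_nonneg v q : 0 <= indic v q.
Proof. unfold indic. destruct (ERleb (EFin v) q); lra. Qed.

Section Coverage.
Context {p : nat} (H : Pt p -> Pt p -> list (Pt p) -> R)
        (w : Pt p -> R) (V : Pt p -> R -> R)
        (X : nat -> Pt p) (Y : nat -> R) (n : nat) (at_ : R).

Lemma wn_nonneg (hw : forall x, 0 <= w x) i : 0 <= wn w X n i.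
Proof. apply div_nonneg; [|apply sumR_nonneg]; auto. Qed.

Lemma pH_nonneg (hH : forall a b l, 0 <= H a b l) i j : 0 <= pH H X n i j.
Proof. apply div_nonneg; [|apply sumR_nonneg]; intros; apply hH. Qed.

Lemma dist_quant_mono (hH : forall a b l, 0 <= H a b l) i x1 x2 : ERle x1 x2 ->
  ERle (Quant at_ (dist_i H V X Y n i x1)) (Quant at_ (dist_i H V X Y n i x2)).
Proof. apply Quant_last_mono, pH_nonneg, hH. Qed.

Lemma alpha_hat_split y :
  alpha_hat H w V X Y n at_ y =
  sumR (fun i => wn w X n i * indic (Vsc V X Y i) (vstar H V X Y n at_ y i)) (seq 1 n)
  + wn w X n (n + 1) * indic (V (X (n + 1)%nat) y) (vstar H V X Y n at_ y (n + 1)).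
Proof.
  unfold alpha_hat, idx. rewrite seq_app, sumR_app.
  replace (1 + n)%nat with (n + 1)%nat by lia.
  unfold sumR at 2; simpl. unfold Vy at 2. rewrite Nat.eqb_refl, Rplus_0_r.
  f_equal. apply sumR_ext. intros i Hi. apply in_seq in Hi.
  unfold Vy. destruct (Nat.eqb_spec i (n + 1)); [lia|reflexivity].
Qed.

Lemma calib_sum_mono (hw : forall x, 0 <= w x) (q : nat -> ER) y :
  (forall i, ERle (q i) (vstar H V X Y n at_ y i)) ->
  sumR (fun i => wn w X n i * indic (Vsc V X Y i) (q i)) (seq 1 n) <=
  sumR (fun i => wn w X n i * indic (Vsc V X Y i) (vstar H V X Y n at_ y i)) (seq 1 n).
Proof.
  intros Hq. apply sumR_le. intros i _.
  apply Rmult_le_compat_l; [apply wn_nonneg, hw|apply indic_mono, Hq].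
Qed.

Lemma vstar2_le (hH : forall a b l, 0 <= H a b l) y i :
  0 <= V (X (n + 1)%nat) y -> ERle (vstar2 H V X Y n at_ i) (vstar H V X Y n at_ y i).
Proof. intros Hv. apply dist_quant_mono; [exact hH|apply ERle_fin, Hv]. Qed.

(* If the test score exceeds its own threshold v*_{n+1}, then vbar <= V_{n+1}
   by fact (2), so the atom vbar used to define v*_{i1} is dominated. *)
Lemma vstar1_le (hH : forall a b l, 0 <= H a b l) y i :
  ~ ERle (EFin (V (X (n + 1)%nat) y)) (vstar H V X Y n at_ y (n + 1)) ->
  ERle (vstar1 H V X Y n at_ i) (vstar H V X Y n at_ y i).
Proof.
  intros Hout. apply dist_quant_mono; [exact hH|].
  apply Quant_last_inf_le. exact Hout.
Qed.

End Coverage.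

Theorem lemma3 (p n : nat) (w : Pt p -> R) (H : Pt p -> Pt p -> list (Pt p) -> R)
  (V : Pt p -> R -> R) (X : nat -> Pt p) (Y : nat -> R) (at_ alpha : R)
  (hw : forall x, 0 < w x)
  (hH : is_localizer H)
  (hV : forall x y, 0 <= V x y)
  (hat : 0 <= at_ <= 1)
  (halpha : 0 < alpha < 1)
  (h1 : sumR (fun i => wn w X n i * indic (Vsc V X Y i) (vstar1 H V X Y n at_ i)) (seq 1 n)
          >= alpha)
  (h2 : sumR (fun i => wn w X n i * indic (Vsc V X Y i) (vstar2 H V X Y n at_ i)) (seq 1 n)
          + wn w X n (n + 1) >= alpha) :
  forall y : R, alpha_hat H w V X Y n at_ y >= alpha.
Proof.
  intros y.
  assert (hw0 : forall x, 0 <= w x) by (intros x; left; apply hw).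
  assert (hH0 : forall a b l, 0 <= H a b l) by (intros; apply (proj1 hH)).
  rewrite alpha_hat_split.
  set (v := V (X (n + 1)%nat) y).
  set (vtest := vstar H V X Y n at_ y (n + 1)).
  destruct (ERleb (EFin v) vtest) eqn:Hcover.
  -
    assert (Hcal := calib_sum_mono H w V X Y n at_ hw0 _ y
                      (fun i => vstar2_le H V X Y n at_ hH0 y i (hV _ _))).
    unfold indic at 2. fold v vtest. rewrite Hcover. lra.
  -
    assert (Hout : ~ ERle (EFin v) vtest) by (unfold ERle; congruence).
    assert (Hcal := calib_sum_mono H w V X Y n at_ hw0 _ y
                      (fun i => vstar1_le H V X Y n at_ hH0 y i Hout)).
    pose proof (Rmult_le_pos _ _ (wn_nonneg w X n hw0 (n + 1)) (indic_nonneg v vtest)).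
    lra.
Qed.
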